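(* Let $e_1,\dots,e_p$ be unit vectors in $\mathbb{C}^m$ and $f_1,\dots,f_p$ unit vectors in $\mathbb{C}^n$ such that $[e_i]\neq[e_j]$ for $i\neq j$ and $f_1,\dots,f_p$ are linearly independent. If $\lambda_1,\dots,\lambda_p$ are nonnegative numbers with sum $1$, then the separable state $\omega=\sum_i\lambda_i\omega_{e_i\otimes f_i}$ has a unique representation as a convex combination of pure product states.
   Context: States are on $\mathcal{B}(\mathbb{C}^m\otimes\mathbb{C}^n)$; $\omega_z(A)=(Az,z)$ for a unit vector $z$; a pure product state is a state $\omega_{x\otimes y}$ with $x\in\mathbb{C}^m$, $y\in\mathbb{C}^n$ unit vectors. $[x]$ is the line spanned by $x$. Uniqueness means: any two expressions of $\omega$ as convex combinations of pure product states (with positive weights, combining equal terms) coincide. *)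

From HB Require Import structures.
From mathcomp Require Import all_boot all_order all_algebra.
Set Implicit Arguments. Unset Strict Implicit. Unset Printing Implicit Defensive.
Import Order.TTheory GRing.Theory Num.Theory.
Local Open Scope ring_scope.

(* C is an arbitrary numeric algebraically closed field (e.g. the complex
   numbers); vectors of C^m are row vectors 'rV[C]_m; operators on
   C^m (x) C^n are matrices 'M[C]_(m*n), the tensor factor indices being
   combined via mxvec_index. *)

Definition cvec (C : numClosedFieldType) (k : nat) (z : 'rV[C]_k) : 'rV[C]_k :=
  map_mx Num.conj z.

Definition unit_vec (C : numClosedFieldType) (k : nat) (z : 'rV[C]_k) : Prop :=
  (z *m (cvec z)^T) 0 0 = 1.

Definition vstate (C : numClosedFieldType) (k : nat) (z : 'rV[C]_k)
  (A : 'M[C]_k) : C :=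
  (cvec z *m A *m z^T) 0 0.

(* x (tensor) y in C^m (x) C^n = C^(m*n); entry (mxvec_index i j) is x_i y_j *)
Definition tens (C : numClosedFieldType) (m n : nat)
  (x : 'rV[C]_m) (y : 'rV[C]_n) : 'rV[C]_(m * n) :=
  mxvec (x^T *m y).

Definition pstate (C : numClosedFieldType) (m n : nat)
  (x : 'rV[C]_m) (y : 'rV[C]_n) : 'M[C]_(m * n) -> C :=
  vstate (tens x y).

Definition product_decomposition (C : numClosedFieldType) (m n : nat)
  (w : 'M[C]_(m * n) -> C) (k : nat)
  (mu : 'I_k -> C) (x : 'I_k -> 'rV[C]_m) (y : 'I_k -> 'rV[C]_n) : Prop :=
  (forall j, 0 < mu j) /\
  (\sum_(j < k) mu j = 1) /\
  (forall j, unit_vec (x j) /\ unit_vec (y j)) /\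
  (forall j1 j2, j1 != j2 ->
     ~ (forall A, pstate (x j1) (y j1) A = pstate (x j2) (y j2) A)) /\
  (forall A, w A = \sum_(j < k) mu j * pstate (x j) (y j) A).

From HB Require Import structures.
From mathcomp Require Import all_boot all_order all_algebra.
Set Implicit Arguments. Unset Strict Implicit. Unset Printing Implicit Defensive.
Import Order.TTheory GRing.Theory Num.Theory.
Local Open Scope ring_scope.

(* 1. Vector states: on the rank-one operator P_v = conj(v)^T v,
      omega_z(P_v) = |<z, v>|^2 >= 0.  Hence, if
      sum_i lambda_i omega_{u_i} = sum_j mu_j omega_{z_j} with mu_j > 0, every
      z_j lies in the span of the u_i (test with v orthogonal to all u_i).
   2. A product vector x (x) y in the span of the e_i (x) f_i is a multiple of a
      single e_l (x) f_l: contracting with the dual basis g_l of the f_i (for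
      the bilinear pairing <.,.>) gives <y, g_l> x = c_l e_l, so each nonzero
      coefficient c_l forces [e_l] = [x], and the lines [e_i] are distinct.
      Unit norms then give equal states.
   3. The operators P_{w_i} with w_i = conj(e_i) (x) g_i separate the states
      omega_{e_i (x) f_i}; evaluating the state on them recovers the weights,
      so any decomposition lists each state with lambda_i > 0 exactly once, with
      weight lambda_i.  Two decompositions are thus matched by a bijection. *)

Section VectorStates.
Variable C : numClosedFieldType.

(* The bilinear pairing <z, v> = sum_a z_a v_a; the inner product is
   (z, v) = <z, conj v>. *)
Definition pairing (k : nat) (z v : 'rV[C]_k) : C := (z *m v^T) 0 0.

Lemma pairingC k (z v : 'rV[C]_k) : pairing z v = pairing v z.
Proof.
by rewrite /pairing -[z *m _]trmxK trmx_mul trmxK mxE.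
Qed.

Lemma pairing_cvec k (z v : 'rV[C]_k) : pairing (cvec z) (cvec v) = (pairing z v)^*.
Proof.
rewrite /pairing /cvec !mxE rmorph_sum.
by apply: eq_bigr => a _; rewrite !mxE rmorphM.
Qed.

Lemma unit_vecE k (z : 'rV[C]_k) : unit_vec z <-> pairing z (cvec z) = 1.
Proof. by []. Qed.

Lemma vstate_rank1 k (z v : 'rV[C]_k) :
  vstate z ((cvec v)^T *m v) = (pairing z v)^* * pairing z v.
Proof.
rewrite /vstate mulmxA -[_ *m v *m _]mulmxA [LHS]mxE big_ord1.
by rewrite -pairing_cvec [X in _ * X = _]pairingC.
Qed.

Lemma vstate_rank1_ge0 k (z v : 'rV[C]_k) : 0 <= vstate z ((cvec v)^T *m v).
Proof. by rewrite vstate_rank1 mulrC mul_conjC_ge0. Qed.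

Lemma vstate_rank1_eq0 k (z v : 'rV[C]_k) :
  (vstate z ((cvec v)^T *m v) == 0) = (pairing z v == 0).
Proof. by rewrite vstate_rank1 mulrC mul_conjC_eq0. Qed.

Lemma cvecZ k (c : C) (z : 'rV[C]_k) : cvec (c *: z) = c^* *: cvec z.
Proof. by apply/rowP => a; rewrite !mxE rmorphM. Qed.

Lemma vstate_scale k (c : C) (z : 'rV[C]_k) A :
  vstate (c *: z) A = c^* * c * vstate z A.
Proof.
by rewrite /vstate cvecZ [(_ *: z)^T]linearZ -!scalemxAl -scalemxAr !mxE mulrA.
Qed.

Lemma vstate_unit_scale k (c : C) (u : 'rV[C]_k) :
  unit_vec u -> unit_vec (c *: u) -> vstate (c *: u) =1 vstate u.
Proof.
move=> /unit_vecE Hu /unit_vecE; rewrite /pairing in Hu.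
rewrite cvecZ /pairing [(_ *: cvec u)^T]linearZ -scalemxAl -scalemxAr scalerA.
by rewrite mxE Hu mulr1 mulrC => Hc A; rewrite vstate_scale Hc mul1r.
Qed.

Lemma unit_vec_neq0 k (z : 'rV[C]_k) : unit_vec z -> z != 0.
Proof.
move=> /unit_vecE; apply: contra_eq_neq => ->.
by rewrite /pairing mul0mx mxE eq_sym oner_neq0.
Qed.

Lemma vstate_decomposition_support (N p k : nat) (u : 'I_p -> 'rV[C]_N)
    (lambda : 'I_p -> C) (mu : 'I_k -> C) (z : 'I_k -> 'rV[C]_N) :
  (forall j, 0 < mu j) ->
  (forall A, \sum_(i < p) lambda i * vstate (u i) A
             = \sum_(j < k) mu j * vstate (z j) A) ->
  forall j, (z j <= \matrix_(i < p) u i)%MS.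
Proof.
move=> Hmu Hdec j; set U := \matrix_(i < p) u i.
rewrite submxE; apply/eqP/rowP => c; set v := (col c (cokermx U))^T.
have orth_u i : pairing (u i) v = 0.
  have := congr1 (fun M : 'M_(p, N) => M i c) (mulmx_coker U).
  rewrite !mxE => H; rewrite /pairing trmxK -[RHS]H mxE.
  by apply: eq_bigr => b _; rewrite !mxE.
have sum0 : \sum_(j < k) mu j * vstate (z j) ((cvec v)^T *m v) = 0.
  rewrite -Hdec big1 // => i _ .
  by rewrite vstate_rank1 orth_u rmorph0 mul0r mulr0.
have term_ge0 j' : true -> 0 <= mu j' * vstate (z j') ((cvec v)^T *m v).
  by move=> _; rewrite mulr_ge0 ?vstate_rank1_ge0 ?ltW.
have /eqP := psumr_eq0P term_ge0 sum0 (i := j) isT.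
rewrite mulf_eq0 (gt_eqF (Hmu j)) vstate_rank1_eq0 /pairing trmxK mxE => /eqP H.
by rewrite [RHS]mxE -H mxE; apply: eq_bigr => b _; rewrite !mxE.
Qed.

Lemma tens_pairing m n (x a : 'rV[C]_m) (y b : 'rV[C]_n) :
  pairing (tens x y) (tens a b) = pairing x a * pairing y b.
Proof.
rewrite /pairing /tens mxvec_dotmul mulmxA -mulmxA [LHS]mxE big_ord1.
by rewrite -/(pairing b y) pairingC.
Qed.

Lemma cvec_tens m n (x : 'rV[C]_m) (y : 'rV[C]_n) :
  cvec (tens x y) = tens (cvec x) (cvec y).
Proof. by rewrite /cvec /tens map_mxvec map_mxM map_trmx. Qed.

Lemma unit_tens m n (x : 'rV[C]_m) (y : 'rV[C]_n) :
  unit_vec x -> unit_vec y -> unit_vec (tens x y).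
Proof.
move=> /unit_vecE ux /unit_vecE uy.
by apply/unit_vecE; rewrite cvec_tens tens_pairing ux uy mulr1.
Qed.

Lemma tens_eq0 m n (x : 'rV[C]_m) (y : 'rV[C]_n) :
  x != 0 -> y != 0 -> tens x y != 0.
Proof.
move=> /rV0Pn[a xa] /rV0Pn[b yb]; apply/rV0Pn; exists (mxvec_index a b).
by rewrite /tens mxvecE mxE big_ord1 !mxE mulf_neq0.
Qed.

End VectorStates.

Section ProductVectors.
Variables (C : numClosedFieldType) (m n p : nat).
Variables (e : 'I_p -> 'rV[C]_m) (f : 'I_p -> 'rV[C]_n) (G : 'M[C]_(n, p)).
(* G is a right inverse of the matrix with rows f_i: the columns of G form a
   dual basis g_l of the f_i for the pairing. *)
Hypothesis HG : (\matrix_(i < p) f i) *m G = 1%:M.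

Definition dual_vec (l : 'I_p) : 'rV[C]_n := (col l G)^T.

Lemma pairing_dual k l : pairing (f k) (dual_vec l) = (k == l)%:R.
Proof.
have := congr1 (fun M : 'M[C]_p => M k l) HG; rewrite !mxE => <-.
by rewrite /pairing /dual_vec trmxK mxE; apply: eq_bigr => b _; rewrite !mxE.
Qed.

Lemma tens_contract (x : 'rV[C]_m) (y : 'rV[C]_n) (c : 'I_p -> C) l :
  tens x y = \sum_(i < p) c i *: tens (e i) (f i) ->
  pairing y (dual_vec l) *: x = c l *: e l.
Proof.
move=> Hxy; have : x^T *m y = \sum_(i < p) c i *: ((e i)^T *m f i).
  apply: (can_inj mxvecK); rewrite -/(tens x y) Hxy linear_sum.
  by apply: eq_bigr => i _; rewrite linearZ.
move=> /(congr1 (mulmx^~ (col l G))).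
have contract (u : 'rV[C]_n) : u *m col l G = (pairing u (dual_vec l))%:M.
  by rewrite [LHS]mx11_scalar /pairing /dual_vec trmxK.
rewrite -mulmxA contract mul_mx_scalar mulmx_suml.
under eq_bigr do rewrite -scalemxAl -mulmxA contract pairing_dual mul_mx_scalar.
rewrite (bigD1 l) //= big1 => [|i il]; last by rewrite (negbTE il) scale0r scaler0.
by rewrite eqxx scale1r addr0 => /(congr1 trmx); rewrite !linearZ /= !trmxK.
Qed.

Hypothesis e_neq0 : forall i, e i != 0.
Hypothesis e_lines : forall i j, i != j -> ~~ (e i == e j)%MS.

Lemma tens_in_span_single (x : 'rV[C]_m) (y : 'rV[C]_n) (c : 'I_p -> C) :
  x != 0 -> y != 0 -> tens x y = \sum_(i < p) c i *: tens (e i) (f i) ->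
  exists l, tens x y = c l *: tens (e l) (f l).
Proof.
move=> x0 y0 Hxy.
have same_line l : c l != 0 -> (e l :=: x)%MS.
  move=> cl0; have Hl := tens_contract l Hxy.
  have d0 : pairing y (dual_vec l) != 0.
    apply: contraNneq (e_neq0 l) => d0; move/esym/eqP: Hl.
    by rewrite d0 scale0r scaler_eq0 (negbTE cl0).
  have -> : e l = ((c l)^-1 * pairing y (dual_vec l)) *: x.
    by rewrite -scalerA Hl scalerA mulVf // scale1r.
  by apply: eqmx_scale; rewrite mulf_neq0 ?invr_eq0.
have [l cl0] : exists l, c l != 0.
  apply/existsP; apply: contraR (tens_eq0 x0 y0) => /existsPn c0.
  by rewrite Hxy big1 // => i _; move: (c0 i); rewrite negbK => /eqP ->; rewrite scale0r.
exists l; rewrite Hxy (bigD1 l) //= big1 ?addr0 // => i il.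
have /eqP -> : c i == 0.
  apply: contraNT (e_lines il) => ci0.
  by apply/eqmxP; apply: eqmx_trans (same_line _ ci0) (eqmx_sym (same_line _ cl0)).
by rewrite scale0r.
Qed.

Definition test_vec (i : 'I_p) : 'rV[C]_(m * n) := tens (cvec (e i)) (dual_vec i).
Definition test_op (i : 'I_p) : 'M[C]_(m * n) := (cvec (test_vec i))^T *m test_vec i.

Lemma pstate_test k i : unit_vec (e k) -> pstate (e k) (f k) (test_op i) = (k == i)%:R.
Proof.
move=> /unit_vecE ek; rewrite /pstate vstate_rank1 tens_pairing pairing_dual.
have [<-|_] := eqVneq k i; last by rewrite mulr0 rmorph0 mul0r.
by rewrite ek mulr1 rmorph1 mulr1.
Qed.

End ProductVectors.

Section Weights.
Variables (R : nzRingType) (T : Type) (p k : nat).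
Variables (phi : 'I_p -> T -> R) (t : 'I_p -> T).
Hypothesis phi_t : forall k i, phi k (t i) = (k == i)%:R.
Variables (lambda : 'I_p -> R) (mu : 'I_k -> R) (kf : 'I_k -> 'I_p).
Hypothesis Hdec : forall A, \sum_(i < p) lambda i * phi i A
                           = \sum_(j < k) mu j * phi (kf j) A.

Lemma weight_sum i : lambda i = \sum_(j < k) mu j * (kf j == i)%:R.
Proof.
have := Hdec (t i); rewrite (bigD1 i) //= big1 => [|l /negbTE li].
  by rewrite phi_t eqxx mulr1 addr0 => ->; apply: eq_bigr => j _; rewrite phi_t.
by rewrite phi_t li mulr0.
Qed.

Lemma weight_of_index : injective kf -> forall j, mu j = lambda (kf j).
Proof.
move=> kf_inj j; rewrite weight_sum (bigD1 j) //= eqxx mulr1 big1 ?addr0 // => l lj.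
by rewrite (inj_eq kf_inj) (negbTE lj) mulr0.
Qed.

Lemma index_hit i : lambda i != 0 -> exists j, kf j = i.
Proof.
move=> li; have [j /eqP|none] := pickP (fun j => kf j == i); first by exists j.
by move: li; rewrite weight_sum big1 ?eqxx // => j _; rewrite none mulr0.
Qed.

End Weights.

Lemma match_indices (k1 k2 p : nat) (kf1 : 'I_k1 -> 'I_p) (kf2 : 'I_k2 -> 'I_p) :
  injective kf1 -> injective kf2 ->
  (forall j, exists j2, kf2 j2 = kf1 j) -> (forall j, exists j1, kf1 j1 = kf2 j) ->
  exists sigma : 'I_k1 -> 'I_k2, bijective sigma /\ forall j, kf2 (sigma j) = kf1 j.
Proof.
move=> inj1 inj2 /fin_all_exists[sigma Hs] /fin_all_exists[tau Ht].
exists sigma; split=> //; exists tau => j; [apply: inj1 | apply: inj2];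
by rewrite ?Ht ?Hs.
Qed.

Section Decompositions.
Variables (C : numClosedFieldType) (m n p : nat).
Variables (e : 'I_p -> 'rV[C]_m) (f : 'I_p -> 'rV[C]_n) (lambda : 'I_p -> C).
Variable G : 'M[C]_(n, p).
Hypothesis e_unit : forall i, unit_vec (e i).
Hypothesis f_unit : forall i, unit_vec (f i).
Hypothesis e_lines : forall i j, i != j -> ~~ (e i == e j)%MS.
Hypothesis HG : (\matrix_(i < p) f i) *m G = 1%:M.

Variables (k : nat) (mu : 'I_k -> C).
Variables (x : 'I_k -> 'rV[C]_m) (y : 'I_k -> 'rV[C]_n).
Hypothesis D : product_decomposition
  (fun A => \sum_(i < p) lambda i * pstate (e i) (f i) A) mu x y.

Lemma product_term_listed j : exists l, pstate (x j) (y j) =1 pstate (e l) (f l).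
Proof.
have [mu_gt0 [_ [xy_unit [_ Hdec]]]] := D.
have [ux uy] := xy_unit j.
have /submxP[c Hc] := vstate_decomposition_support mu_gt0 Hdec j.
have Hspan : tens (x j) (y j) = \sum_(i < p) c 0 i *: tens (e i) (f i).
  by rewrite Hc mulmx_sum_row; apply: eq_bigr => i _; rewrite rowK.
have e_neq0 i : e i != 0 by apply: unit_vec_neq0.
have [l Hl] :=
  tens_in_span_single HG e_neq0 e_lines (unit_vec_neq0 ux) (unit_vec_neq0 uy) Hspan.
exists l; rewrite /pstate Hl; apply: vstate_unit_scale.
  exact: unit_tens.
by rewrite -Hl; apply: unit_tens.
Qed.

Lemma decomposition_index : exists kf : 'I_k -> 'I_p,
  [/\ injective kf,
      forall j, pstate (x j) (y j) =1 pstate (e (kf j)) (f (kf j)),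
      forall j, mu j = lambda (kf j)
    & forall i, lambda i != 0 -> exists j, kf j = i].
Proof.
have [_ [_ [_ [distinct Hdec]]]] := D.
have [kf Hkf] := fin_all_exists product_term_listed.
have kf_inj : injective kf.
  move=> j1 j2 same; apply/eqP; apply: contraT => j12.
  by case: (distinct _ _ j12) => A; rewrite !Hkf same.
pose phi l := pstate (e l) (f l).
have Hdec' A : \sum_(i < p) lambda i * phi i A = \sum_(j < k) mu j * phi (kf j) A.
  by rewrite Hdec; apply: eq_bigr => j _; rewrite Hkf.
have phi_t l i : phi l (test_op e G i) = (l == i)%:R.
  by apply: pstate_test.
exists kf; split=> //; first exact: (weight_of_index phi_t Hdec' kf_inj).
exact: (index_hit phi_t Hdec').
Qed.

End Decompositions.

Theorem mainTheorem5 (C : numClosedFieldType) (m n p : nat)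
  (e : 'I_p -> 'rV[C]_m) (f : 'I_p -> 'rV[C]_n) (lambda : 'I_p -> C) :
  (forall i, unit_vec (e i)) ->
  (forall i, unit_vec (f i)) ->
  (forall i j, i != j -> ~~ (e i == e j)%MS) ->
  row_free (\matrix_(i < p) f i) ->
  (forall i, 0 <= lambda i) ->
  \sum_(i < p) lambda i = 1 ->
  forall (k1 : nat) (mu1 : 'I_k1 -> C) (x1 : 'I_k1 -> 'rV[C]_m)
         (y1 : 'I_k1 -> 'rV[C]_n)
         (k2 : nat) (mu2 : 'I_k2 -> C) (x2 : 'I_k2 -> 'rV[C]_m)
         (y2 : 'I_k2 -> 'rV[C]_n),
  let w := fun A => \sum_(i < p) lambda i * pstate (e i) (f i) A in
  product_decomposition w mu1 x1 y1 ->
  product_decomposition w mu2 x2 y2 ->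
  exists sigma : 'I_k1 -> 'I_k2,
    bijective sigma /\
    forall j, mu2 (sigma j) = mu1 j /\
      (forall A, pstate (x2 (sigma j)) (y2 (sigma j)) A
                 = pstate (x1 j) (y1 j) A).
Proof.
move=> e_unit f_unit e_lines /row_freeP[G HG] _ _ k1 mu1 x1 y1 k2 mu2 x2 y2 w D1 D2.
have [kf1 [inj1 st1 mu1E hit1]] := decomposition_index e_unit f_unit e_lines HG D1.
have [kf2 [inj2 st2 mu2E hit2]] := decomposition_index e_unit f_unit e_lines HG D2.
have pos1 j : lambda (kf1 j) != 0 by rewrite -mu1E; case: D1 => /(_ j) /lt0r_neq0.
have pos2 j : lambda (kf2 j) != 0 by rewrite -mu2E; case: D2 => /(_ j) /lt0r_neq0.
have [sigma [bij_sigma Hsigma]] :=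
  match_indices inj1 inj2 (fun j => hit2 _ (pos1 j)) (fun j => hit1 _ (pos2 j)).
exists sigma; split=> // j; rewrite mu2E mu1E Hsigma; split=> // A.
by rewrite st1 st2 Hsigma.
Qed.
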